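(* Any set of $5$ points in $\mathbb{R}^2$ that is in convex position is in c.s.c. position.
   Context: A set $S\subset\mathbb{R}^2$ is in convex position if every point of $S$ lies on the boundary of $\mathrm{conv}(S)$. A set of points in $\mathbb{R}^2$ is in c.s.c. position (centrally symmetric convex position) if it is contained in the boundary of a centrally symmetric convex body. *)

From Stdlib Require Import Reals.
Open Scope R_scope.

Definition pt := (R * R)%type.

Definition dist2 (x y : pt) : R :=
  sqrt ((fst x - fst y)^2 + (snd x - snd y)^2).

Fixpoint rsum (n : nat) (f : nat -> R) : R :=
  match n with
  | O => 0
  | S m => rsum m f + f m
  end.

Definition interior (A : pt -> Prop) (x : pt) : Prop :=
  exists eps, 0 < eps /\ forall y, dist2 x y < eps -> A y.

Definition closure (A : pt -> Prop) (x : pt) : Prop :=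
  forall eps, 0 < eps -> exists y, A y /\ dist2 x y < eps.

Definition boundary (A : pt -> Prop) (x : pt) : Prop :=
  closure A x /\ ~ interior A x.

Definition is_closed (A : pt -> Prop) : Prop :=
  forall x, closure A x -> A x.

Definition is_bounded (A : pt -> Prop) : Prop :=
  exists M, forall x, A x -> dist2 (0,0) x <= M.

Definition is_convex (A : pt -> Prop) : Prop :=
  forall x y t, A x -> A y -> 0 <= t <= 1 ->
    A (t * fst x + (1 - t) * fst y, t * snd x + (1 - t) * snd y).

Definition convex_body (K : pt -> Prop) : Prop :=
  is_convex K /\ is_closed K /\ is_bounded K /\ exists x, interior K x.

Definition centrally_symmetric (K : pt -> Prop) : Prop :=
  exists c : pt, forall x, K x -> K (2 * fst c - fst x, 2 * snd c - snd x).

Definition conv_hull (n : nat) (p : nat -> pt) (x : pt) : Prop :=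
  exists l : nat -> R,
    (forall i, (i < n)%nat -> 0 <= l i) /\
    rsum n l = 1 /\
    x = (rsum n (fun i => l i * fst (p i)), rsum n (fun i => l i * snd (p i))).

Definition in_convex_position (n : nat) (p : nat -> pt) : Prop :=
  forall i, (i < n)%nat -> boundary (conv_hull n p) (p i).

Definition csc_position (n : nat) (p : nat -> pt) : Prop :=
  exists K : pt -> Prop, convex_body K /\ centrally_symmetric K /\
    forall i, (i < n)%nat -> boundary K (p i).

From Pilot Require Import Defs.
From Stdlib Require Import Reals Lra Lia Psatz List Permutation Sorting.Sorted Classical.
Import ListNotations.
Open Scope R_scope.

(* Sorting the points by angle around their lexicographically smallest point labels them
   q0, ..., q4 along the boundary of their hull, so that every side q_i q_(i+1) has all the
   points on its left; collinear points on the boundary make this order delicate.  For such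
   a pentagon there are two directions u, w such that every point maximises or minimises
   [dot u] or [dot w]: the normal of a side, attained also at the vertex farthest from it,
   and the normal of a second side.  The parallelogram cut out by the four extreme support
   lines is a centrally symmetric convex body with all five points on its boundary. *)


Definition dot (u x : pt) : R := fst u * fst x + snd u * snd x.

Definition opp (u : pt) : pt := (- fst u, - snd u).

Definition l1norm (u : pt) : R := Rabs (fst u) + Rabs (snd u).

Definition nonzero (u : pt) : Prop := fst u <> 0 \/ snd u <> 0.

Lemma dot_opp u x : dot (opp u) x = - dot u x.
Proof. unfold dot, opp; simpl; ring. Qed.

Lemma l1norm_ge0 u : 0 <= l1norm u.
Proof. unfold l1norm. pose proof (Rabs_pos (fst u)); pose proof (Rabs_pos (snd u)). lra. Qed.

Lemma l1norm_gt0 u : nonzero u -> 0 < l1norm u.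
Proof.
  unfold l1norm. pose proof (Rabs_pos (fst u)); pose proof (Rabs_pos (snd u)).
  intros [h|h]; pose proof (Rabs_pos_lt _ h); lra.
Qed.

Lemma dist2_refl x : dist2 x x = 0.
Proof. unfold dist2. replace ((fst x - fst x) ^ 2 + (snd x - snd x) ^ 2) with 0 by ring. apply sqrt_0. Qed.

Lemma Rabs_le_sqrt_sum a b : Rabs a <= sqrt (a ^ 2 + b ^ 2).
Proof.
  rewrite <- (sqrt_square (Rabs a)) by apply Rabs_pos.
  apply sqrt_le_1_alt. rewrite <- Rabs_mult, Rabs_right by nra. nra.
Qed.

Lemma sqrt_sum_le_Rabs a b : sqrt (a ^ 2 + b ^ 2) <= Rabs a + Rabs b.
Proof.
  pose proof (Rabs_pos a); pose proof (Rabs_pos b).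
  rewrite <- (sqrt_square (Rabs a + Rabs b)) by lra.
  apply sqrt_le_1_alt. rewrite <- !Rsqr_pow2, (Rsqr_abs a), (Rsqr_abs b).
  unfold Rsqr. nra.
Qed.

Lemma dist2_le_l1 x y : dist2 x y <= Rabs (fst y - fst x) + Rabs (snd y - snd x).
Proof.
  unfold dist2. rewrite (Rabs_minus_sym (fst y)), (Rabs_minus_sym (snd y)).
  apply sqrt_sum_le_Rabs.
Qed.

Lemma dot_lipschitz u x y : Rabs (dot u y - dot u x) <= l1norm u * dist2 x y.
Proof.
  assert (Hx : Rabs (fst y - fst x) <= dist2 x y).
  { unfold dist2. rewrite Rabs_minus_sym. apply Rabs_le_sqrt_sum. }
  assert (Hy : Rabs (snd y - snd x) <= dist2 x y).
  { unfold dist2. rewrite Rabs_minus_sym, Rplus_comm. apply Rabs_le_sqrt_sum. }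
  unfold dot, l1norm.
  replace (fst u * fst y + snd u * snd y - (fst u * fst x + snd u * snd x))
    with (fst u * (fst y - fst x) + snd u * (snd y - snd x)) by ring.
  eapply Rle_trans; [apply Rabs_triang|]. rewrite !Rabs_mult.
  pose proof (Rabs_pos (fst u)); pose proof (Rabs_pos (snd u)). nra.
Qed.

Lemma interior_mono (A B : pt -> Prop) x :
  (forall y, A y -> B y) -> Defs.interior A x -> Defs.interior B x.
Proof. intros AB [eps [He Hi]]. exists eps. auto. Qed.

Lemma interior_and (A B : pt -> Prop) x :
  Defs.interior A x -> Defs.interior B x -> Defs.interior (fun y => A y /\ B y) x.
Proof.
  intros [e1 [He1 H1]] [e2 [He2 H2]]. exists (Rmin e1 e2). split.
  - apply Rmin_glb_lt; auto.
  - intros y Hy. pose proof (Rmin_l e1 e2); pose proof (Rmin_r e1 e2). split; [apply H1|apply H2]; lra.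
Qed.

Lemma dot_lt_interior u b x :
  dot u x < b -> Defs.interior (fun y => dot u y < b) x.
Proof.
  intros Hx. pose proof (l1norm_ge0 u).
  exists ((b - dot u x) / (l1norm u + 1)). split; [apply Rdiv_lt_0_compat; lra|].
  intros y Hy. pose proof (dot_lipschitz u x y). pose proof (Rle_abs (dot u y - dot u x)).
  assert (l1norm u * dist2 x y <= l1norm u * ((b - dot u x) / (l1norm u + 1)))
    by (apply Rmult_le_compat_l; lra).
  assert (l1norm u * ((b - dot u x) / (l1norm u + 1)) < b - dot u x).
  { apply (Rmult_lt_reg_r (l1norm u + 1)); [lra|]. field_simplify; nra. }
  lra.
Qed.

Lemma dot_gt_interior u a x :
  a < dot u x -> Defs.interior (fun y => a < dot u y) x.
Proof.
  intros Hx. apply (interior_mono (fun y => dot (opp u) y < - a)).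
  - intros y. rewrite dot_opp. lra.
  - apply dot_lt_interior. rewrite dot_opp. lra.
Qed.

Lemma closure_dot_le (K : pt -> Prop) u b x :
  (forall y, K y -> dot u y <= b) -> Defs.closure K x -> dot u x <= b.
Proof.
  intros HK Hc. apply Rnot_lt_le. intros Hx.
  destruct (dot_gt_interior u b x Hx) as [eps [He Hi]].
  destruct (Hc eps He) as [y [Ky Hy]].
  specialize (HK y Ky). specialize (Hi y Hy). lra.
Qed.

Lemma closure_dot_ge (K : pt -> Prop) u a x :
  (forall y, K y -> a <= dot u y) -> Defs.closure K x -> a <= dot u x.
Proof.
  intros HK Hc. assert (dot (opp u) x <= - a); [|rewrite dot_opp in *; lra].
  apply (closure_dot_le K); auto. intros y Ky. rewrite dot_opp. specialize (HK y Ky). lra.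
Qed.

(* Moving from [x] a little in direction [u] leaves every half-plane [dot u _ <= b]
   that has [x] on its boundary line. *)
Lemma dot_max_not_interior (K : pt -> Prop) u b x :
  nonzero u -> (forall y, K y -> dot u y <= b) -> dot u x = b -> ~ Defs.interior K x.
Proof.
  intros Hu HK Hx [eps [He Hi]].
  pose proof (l1norm_gt0 u Hu) as Hl.
  assert (Hn : 0 < fst u ^ 2 + snd u ^ 2)
    by (destruct Hu as [h|h]; pose proof (Rsqr_pos_lt _ h); rewrite Rsqr_pow2 in *; nra).
  set (t := eps / (2 * l1norm u)).
  assert (Ht : 0 < t) by (unfold t; apply Rdiv_lt_0_compat; lra).
  set (y := (fst x + t * fst u, snd x + t * snd u)).
  assert (Hd : dist2 x y < eps).
  { eapply Rle_lt_trans; [apply dist2_le_l1|]. unfold y; simpl.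
    replace (fst x + t * fst u - fst x) with (t * fst u) by ring.
    replace (snd x + t * snd u - snd x) with (t * snd u) by ring.
    rewrite !Rabs_mult, (Rabs_right t) by lra.
    replace (t * Rabs (fst u) + t * Rabs (snd u)) with (t * l1norm u) by (unfold l1norm; ring).
    unfold t. field_simplify; lra. }
  specialize (HK y (Hi y Hd)). unfold dot, y in HK, Hx; simpl in HK. nra.
Qed.

Lemma dot_min_not_interior (K : pt -> Prop) u a x :
  nonzero u -> (forall y, K y -> a <= dot u y) -> dot u x = a -> ~ Defs.interior K x.
Proof.
  intros Hu HK Hx. apply (dot_max_not_interior K (opp u) (- a)).
  - unfold nonzero, opp; simpl. destruct Hu; [left|right]; lra.
  - intros y Ky. rewrite dot_opp. specialize (HK y Ky). lra.
  - rewrite dot_opp. lra.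
Qed.
Definition orient (a b c : pt) : R :=
  (fst b - fst a) * (snd c - snd a) - (snd b - snd a) * (fst c - fst a).

Definition dilation (A : pt) (t : R) (b c : pt) : Prop :=
  fst c = fst A + t * (fst b - fst A) /\ snd c = snd A + t * (snd b - snd A).

Definition normal (a b : pt) : pt := (- (snd b - snd a), fst b - fst a).

Lemma dot_normal a b y : dot (normal a b) y = orient a b y + dot (normal a b) a.
Proof. unfold dot, normal, orient; simpl; ring. Qed.

Lemma orient_pos_interior a b x :
  orient a b x > 0 -> Defs.interior (fun y => orient a b y > 0) x.
Proof.
  intros H. apply (interior_mono (fun y => dot (normal a b) a < dot (normal a b) y)).
  - intros y. rewrite (dot_normal a b y). lra.
  - apply dot_gt_interior. rewrite (dot_normal a b x). lra.
Qed.

Definition indicator (i m : nat) : R := if Nat.eqb m i then 1 else 0.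

Lemma rsum_plus n f g : rsum n (fun m => f m + g m) = rsum n f + rsum n g.
Proof. induction n; simpl; [ring | rewrite IHn; ring]. Qed.

Lemma rsum_scal n c f : rsum n (fun m => c * f m) = c * rsum n f.
Proof. induction n; simpl; [ring | rewrite IHn; ring]. Qed.

Lemma rsum_ext n f g : (forall m, (m < n)%nat -> f m = g m) -> rsum n f = rsum n g.
Proof. induction n; intros H; simpl; auto. rewrite IHn, H; auto. Qed.

Lemma rsum_indicator n i f : (i < n)%nat -> rsum n (fun m => indicator i m * f m) = f i.
Proof.
  induction n; intros Hi; [lia|]. simpl. unfold indicator at 2.
  destruct (Nat.eqb_spec n i) as [->|Hn].
  - rewrite (rsum_ext i _ (fun _ => 0 * 0)).
    + rewrite rsum_scal. ring.
    + intros m Hm. unfold indicator. destruct (Nat.eqb_spec m i); [lia | ring].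
  - rewrite IHn by lia. ring.
Qed.

(* Barycentric coordinates of [x] with respect to the triangle [p i, p j, p k]. *)
Lemma triangle_in_hull n (p : nat -> pt) i j k x :
  (i < n)%nat -> (j < n)%nat -> (k < n)%nat ->
  orient (p i) (p j) (p k) > 0 ->
  orient (p j) (p k) x >= 0 -> orient (p k) (p i) x >= 0 -> orient (p i) (p j) x >= 0 ->
  conv_hull n p x.
Proof.
  intros Hi Hj Hk HD H1 H2 H3.
  set (Dl := orient (p i) (p j) (p k)) in *.
  set (la := orient (p j) (p k) x / Dl).
  set (lb := orient (p k) (p i) x / Dl).
  set (lc := orient (p i) (p j) x / Dl).
  exists (fun m => la * indicator i m + lb * indicator j m + lc * indicator k m).
  assert (Hsum : forall f : nat -> R,
    rsum n (fun m => (la * indicator i m + lb * indicator j m + lc * indicator k m) * f m)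
    = la * f i + lb * f j + lc * f k).
  { intros f.
    rewrite (rsum_ext n _ (fun m => la * (indicator i m * f m) + lb * (indicator j m * f m)
                                  + lc * (indicator k m * f m))) by (intros; ring).
    rewrite !rsum_plus, !rsum_scal, !rsum_indicator by auto. ring. }
  assert (Hpos : 0 <= la /\ 0 <= lb /\ 0 <= lc).
  { unfold la, lb, lc. pose proof (Rinv_0_lt_compat Dl HD).
    repeat split; apply Rmult_le_pos; lra. }
  split; [|split].
  - intros m _. unfold indicator.
    destruct (Nat.eqb m i), (Nat.eqb m j), (Nat.eqb m k); lra.
  - rewrite (rsum_ext n _ (fun m => (la * indicator i m + lb * indicator j m + lc * indicator k m) * 1))
      by (intros; ring).
    rewrite Hsum. unfold la, lb, lc, Dl, orient. field. unfold Dl, orient in HD. lra.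
  - rewrite !Hsum. destruct x as [x1 x2].
    unfold la, lb, lc, Dl, orient in *. simpl in *. f_equal; field; lra.
Qed.

Lemma triangle_interior_hull n (p : nat -> pt) i j k x :
  (i < n)%nat -> (j < n)%nat -> (k < n)%nat ->
  orient (p i) (p j) x > 0 -> orient (p j) (p k) x > 0 -> orient (p k) (p i) x > 0 ->
  Defs.interior (conv_hull n p) x.
Proof.
  intros Hi Hj Hk H1 H2 H3.
  pose proof (interior_and _ _ _ (orient_pos_interior _ _ _ H1)
               (interior_and _ _ _ (orient_pos_interior _ _ _ H2) (orient_pos_interior _ _ _ H3)))
    as Hint.
  eapply interior_mono; [|exact Hint]. simpl.
  intros y [G1 [G2 G3]]. apply (triangle_in_hull n p i j k y); auto; try lra.
  unfold orient in *. lra.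
Qed.

(* A point strictly inside the segment [p i, p j] is interior to the union of the
   triangles [p i, p j, p k] and [p j, p i, p l] lying on the two sides of the line. *)
Lemma chord_interior_hull n (p : nat -> pt) i j k l x t :
  (i < n)%nat -> (j < n)%nat -> (k < n)%nat -> (l < n)%nat ->
  0 < t < 1 ->
  dilation (p i) t (p j) x ->
  orient (p i) (p j) (p k) > 0 -> orient (p i) (p j) (p l) < 0 ->
  Defs.interior (conv_hull n p) x.
Proof.
  intros Hi Hj Hk Hl Ht [Ex1 Ex2] Hc Hd.
  assert (H1 : orient (p j) (p k) x > 0).
  { replace (orient (p j) (p k) x) with ((1 - t) * orient (p i) (p j) (p k))
      by (unfold orient; rewrite Ex1, Ex2; ring).
    apply Rmult_lt_0_compat; lra. }
  assert (H2 : orient (p k) (p i) x > 0).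
  { replace (orient (p k) (p i) x) with (t * orient (p i) (p j) (p k))
      by (unfold orient; rewrite Ex1, Ex2; ring).
    apply Rmult_lt_0_compat; lra. }
  assert (H3 : orient (p i) (p l) x > 0).
  { replace (orient (p i) (p l) x) with (t * (- orient (p i) (p j) (p l)))
      by (unfold orient; rewrite Ex1, Ex2; ring).
    apply Rmult_lt_0_compat; lra. }
  assert (H4 : orient (p l) (p j) x > 0).
  { replace (orient (p l) (p j) x) with ((1 - t) * (- orient (p i) (p j) (p l)))
      by (unfold orient; rewrite Ex1, Ex2; ring).
    apply Rmult_lt_0_compat; lra. }
  pose proof (interior_and _ _ _
    (interior_and _ _ _ (orient_pos_interior _ _ _ H1) (orient_pos_interior _ _ _ H2))
    (interior_and _ _ _ (orient_pos_interior _ _ _ H3) (orient_pos_interior _ _ _ H4))) as Hint.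
  eapply interior_mono; [|exact Hint]. simpl.
  intros y [[G1 G2] [G3 G4]].
  destruct (Rle_or_lt 0 (orient (p i) (p j) y)).
  - apply (triangle_in_hull n p i j k y); auto; lra.
  - apply (triangle_in_hull n p j i l y); auto; unfold orient in *; lra.
Qed.
Definition cross (u w : pt) : R := fst u * snd w - snd u * fst w.

Lemma cross_nonzero_l u w : cross u w <> 0 -> nonzero u.
Proof.
  unfold cross, nonzero. intros H.
  destruct (Req_dec (fst u) 0) as [E1|E1]; auto.
  destruct (Req_dec (snd u) 0) as [E2|E2]; auto.
  exfalso; apply H; rewrite E1, E2; ring.
Qed.

Lemma cross_nonzero_r u w : cross u w <> 0 -> nonzero w.
Proof.
  unfold cross, nonzero. intros H.
  destruct (Req_dec (fst w) 0) as [E1|E1]; auto.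
  destruct (Req_dec (snd w) 0) as [E2|E2]; auto.
  exfalso; apply H; rewrite E1, E2; ring.
Qed.

Lemma Rabs_le_between a b x : a <= x <= b -> Rabs x <= Rabs a + Rabs b.
Proof. intros. unfold Rabs; repeat destruct Rcase_abs; lra. Qed.

Lemma dot_affine u x y t :
  dot u (t * fst x + (1 - t) * fst y, t * snd x + (1 - t) * snd y)
  = t * dot u x + (1 - t) * dot u y.
Proof. unfold dot; simpl; ring. Qed.

Lemma dot_reflect u c x :
  dot u (2 * fst c - fst x, 2 * snd c - snd x) = 2 * dot u c - dot u x.
Proof. unfold dot; simpl; ring. Qed.

Section Parallelogram.
Variables (u w : pt) (a1 b1 a2 b2 : R).
Hypothesis Hdet : cross u w <> 0.
Hypotheses (Hab1 : a1 < b1) (Hab2 : a2 < b2).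

Definition parallelogram (x : pt) : Prop :=
  (a1 <= dot u x <= b1) /\ (a2 <= dot w x <= b2).

(* Cramer's rule recovers a point from its two coordinates [dot u x], [dot w x]. *)
Definition solve2 (s t : R) : pt :=
  ((snd w * s - snd u * t) / cross u w, (fst u * t - fst w * s) / cross u w).

Lemma dot_solve2_l s t : dot u (solve2 s t) = s.
Proof. unfold dot, solve2, cross in *; simpl; field; auto. Qed.

Lemma dot_solve2_r s t : dot w (solve2 s t) = t.
Proof. unfold dot, solve2, cross in *; simpl; field; auto. Qed.

Lemma solve2_dot x : x = solve2 (dot u x) (dot w x).
Proof. destruct x as [x1 x2]. unfold dot, solve2, cross in *; simpl; f_equal; field; auto. Qed.

Let center := solve2 ((a1 + b1) / 2) ((a2 + b2) / 2).

Lemma parallelogram_convex : is_convex parallelogram.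
Proof.
  intros x y t [[? ?] [? ?]] [[? ?] [? ?]] Ht. unfold parallelogram.
  rewrite !dot_affine. repeat split; nra.
Qed.

Lemma parallelogram_closed : is_closed parallelogram.
Proof.
  intros x Hx. repeat split.
  - apply (closure_dot_ge parallelogram u a1 x); auto. intros y [[? ?] ?]; auto.
  - apply (closure_dot_le parallelogram u b1 x); auto. intros y [[? ?] ?]; auto.
  - apply (closure_dot_ge parallelogram w a2 x); auto. intros y [? [? ?]]; auto.
  - apply (closure_dot_le parallelogram w b2 x); auto. intros y [? [? ?]]; auto.
Qed.

Lemma parallelogram_bounded : is_bounded parallelogram.
Proof.
  set (M1 := Rabs a1 + Rabs b1). set (M2 := Rabs a2 + Rabs b2).
  set (bound c d := (Rabs c * M1 + Rabs d * M2) / Rabs (cross u w)).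
  assert (Hc : forall c d s t, Rabs s <= M1 -> Rabs t <= M2 ->
            Rabs ((c * s - d * t) / cross u w) <= bound c d).
  { intros c d s t Hs Ht. unfold bound, Rdiv. rewrite Rabs_mult, Rabs_inv.
    apply Rmult_le_compat_r; [left; apply Rinv_0_lt_compat, Rabs_pos_lt; auto|].
    eapply Rle_trans; [apply Rabs_triang|]. rewrite Rabs_Ropp, !Rabs_mult.
    pose proof (Rabs_pos c); pose proof (Rabs_pos d).
    apply Rplus_le_compat; apply Rmult_le_compat_l; auto. }
  exists (bound (snd w) (snd u) + bound (- fst w) (- fst u)).
  intros x [Hu Hw].
  pose proof (Rabs_le_between _ _ _ Hu). pose proof (Rabs_le_between _ _ _ Hw).
  eapply Rle_trans; [apply dist2_le_l1|]. simpl. rewrite !Rminus_0_r.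
  rewrite (solve2_dot x). unfold solve2; simpl.
  replace (fst u * dot w x - fst w * dot u x) with (- fst w * dot u x - - fst u * dot w x) by ring.
  apply Rplus_le_compat; apply Hc; auto.
Qed.

Lemma parallelogram_interior_center : Defs.interior parallelogram center.
Proof.
  assert (Hslab : forall v a b, a < b -> dot v center = (a + b) / 2 ->
            Defs.interior (fun y => a < dot v y /\ dot v y < b) center).
  { intros v a b Hab Hm. apply interior_and.
    - apply dot_gt_interior. lra.
    - apply dot_lt_interior. lra. }
  eapply interior_mono; [|apply interior_and; [apply (Hslab u a1 b1) | apply (Hslab w a2 b2)]];
    auto; [|apply dot_solve2_l | apply dot_solve2_r].
  intros y [[? ?] [? ?]]. repeat split; lra.
Qed.

Lemma parallelogram_symmetric : centrally_symmetric parallelogram.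
Proof.
  exists center. intros x [Hu Hw]. unfold parallelogram.
  rewrite !dot_reflect. unfold center. rewrite dot_solve2_l, dot_solve2_r. lra.
Qed.

Lemma parallelogram_boundary x :
  parallelogram x ->
  dot u x = a1 \/ dot u x = b1 \/ dot w x = a2 \/ dot w x = b2 ->
  boundary parallelogram x.
Proof.
  intros Kx Hside. pose proof (cross_nonzero_l u w Hdet). pose proof (cross_nonzero_r u w Hdet). split.
  - intros eps He. exists x. rewrite dist2_refl. auto.
  - destruct Hside as [E|[E|[E|E]]].
    + apply (dot_min_not_interior _ u a1); auto. intros y [[? ?] ?]; auto.
    + apply (dot_max_not_interior _ u b1); auto. intros y [[? ?] ?]; auto.
    + apply (dot_min_not_interior _ w a2); auto. intros y [? [? ?]]; auto.
    + apply (dot_max_not_interior _ w b2); auto. intros y [? [? ?]]; auto.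
Qed.

Lemma csc_of_parallelogram n (p : nat -> pt) :
  (forall i, (i < n)%nat -> parallelogram (p i)) ->
  (forall i, (i < n)%nat ->
     dot u (p i) = a1 \/ dot u (p i) = b1 \/ dot w (p i) = a2 \/ dot w (p i) = b2) ->
  csc_position n p.
Proof.
  intros Hin Hside. exists parallelogram. split; [|split].
  - split; [apply parallelogram_convex|split; [apply parallelogram_closed|split]].
    + apply parallelogram_bounded.
    + exists center. apply parallelogram_interior_center.
  - apply parallelogram_symmetric.
  - intros i Hi. apply parallelogram_boundary; auto.
Qed.

End Parallelogram.

Definition points (n : nat) (p : nat -> pt) : list pt := map p (seq 0 n).

Lemma in_points n p x : In x (points n p) <-> exists i, (i < n)%nat /\ x = p i.
Proof.
  unfold points. rewrite in_map_iff. split.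
  - intros [i [<- Hi]]. apply in_seq in Hi. exists i. split; [lia | reflexivity].
  - intros [i [Hi ->]]. exists i. split; [reflexivity | apply in_seq; lia].
Qed.

Lemma list_argmax {A : Type} (f : A -> R) (l : list A) :
  l <> [] -> exists x, In x l /\ forall y, In y l -> f y <= f x.
Proof.
  induction l as [|a l IH]; intros Hne; [congruence|].
  destruct l as [|b l'].
  - exists a. split; [now left|]. intros y [<-|[]]. lra.
  - destruct IH as [x [Hx Hmax]]; [discriminate|].
    destruct (Rle_dec (f a) (f x)).
    + exists x. split; [now right|]. intros y [<-|Hy]; auto.
    + exists a. split; [now left|]. intros y [<-|Hy]; [lra|]. specialize (Hmax y Hy). lra.
Qed.

Definition extreme (l : list pt) (u x : pt) : Prop :=
  (forall y, In y l -> dot u y <= dot u x) \/ (forall y, In y l -> dot u x <= dot u y).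

Definition two_direction_cover (l : list pt) : Prop :=
  exists u w, nonzero u /\ nonzero w /\ forall x, In x l -> extreme l u x \/ extreme l w x.

(* When all points have the same value [a], the slab is widened to [a, a + 1]. *)
Lemma slab_of_extremes l u :
  l <> [] ->
  exists a b, a < b /\ (forall y, In y l -> a <= dot u y <= b) /\
    (forall x, In x l -> extreme l u x -> dot u x = a \/ dot u x = b).
Proof.
  intros Hl.
  destruct (list_argmax (dot u) l Hl) as [xM [IM HM]].
  destruct (list_argmax (fun y => - dot u y) l Hl) as [xm [Im Hm]].
  assert (Hrange : forall y, In y l -> dot u xm <= dot u y <= dot u xM)
    by (intros y Hy; specialize (HM y Hy); specialize (Hm y Hy); lra).
  destruct (Req_dec (dot u xm) (dot u xM)) as [E|E].
  - exists (dot u xm), (dot u xm + 1). split; [lra|split].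
    + intros y Hy. specialize (Hrange y Hy). lra.
    + intros x Hx _. specialize (Hrange x Hx). left; lra.
  - pose proof (Hrange xm Im).
    exists (dot u xm), (dot u xM). split; [lra|split; auto].
    intros x Hx [Hmax|Hmin]; specialize (Hrange x Hx).
    + right. specialize (Hmax xM IM). lra.
    + left. specialize (Hmin xm Im). lra.
Qed.

Lemma csc_of_cover_independent n p u w :
  (0 < n)%nat -> cross u w <> 0 ->
  (forall x, In x (points n p) -> extreme (points n p) u x \/ extreme (points n p) w x) ->
  csc_position n p.
Proof.
  intros Hn Hdet Hcov.
  assert (Hl : points n p <> []).
  { intros E. assert (In (p 0%nat) (points n p)) by (apply in_points; eauto).
    rewrite E in H. destruct H. }
  destruct (slab_of_extremes _ u Hl) as [a1 [b1 [H1 [Hin1 Hext1]]]].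
  destruct (slab_of_extremes _ w Hl) as [a2 [b2 [H2 [Hin2 Hext2]]]].
  assert (Hp : forall i, (i < n)%nat -> In (p i) (points n p)) by (intros; apply in_points; eauto).
  apply (csc_of_parallelogram u w a1 b1 a2 b2); auto.
  - intros i Hi. split; auto.
  - intros i Hi. destruct (Hcov (p i) (Hp i Hi)) as [E|E].
    + destruct (Hext1 _ (Hp i Hi) E); auto.
    + destruct (Hext2 _ (Hp i Hi) E); auto.
Qed.

Lemma parallel_multiple u w :
  nonzero u -> cross u w = 0 ->
  w = (dot u w / dot u u * fst u, dot u w / dot u u * snd u).
Proof.
  intros Hu Hc. unfold cross in Hc.
  assert (Hn : dot u u <> 0).
  { unfold dot. destruct Hu as [h|h]; pose proof (Rsqr_pos_lt _ h); unfold Rsqr in *; nra. }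
  destruct w as [w1 w2]. unfold dot in *. simpl in *.
  assert (E : fst u * w2 = snd u * w1) by lra.
  f_equal; field_simplify_eq; auto.
  - transitivity (w1 * fst u ^ 2 + snd u * (fst u * w2)); [rewrite E|]; ring.
  - transitivity (fst u * (fst u * w2) + w2 * snd u ^ 2); [|rewrite E]; ring.
Qed.

Lemma extreme_scale l u x k :
  k <> 0 -> extreme l (k * fst u, k * snd u) x -> extreme l u x.
Proof.
  intros Hk He.
  assert (E : forall y, dot (k * fst u, k * snd u) y = k * dot u y) by (intros; unfold dot; simpl; ring).
  unfold extreme in *.
  destruct (Rlt_or_le 0 k) as [Hpos|Hnpos]; [|assert (Hneg : k < 0) by lra];
    destruct He as [Hx|Hx]; [left|right|right|left];
    intros y Hy; specialize (Hx y Hy); rewrite !E in Hx; nra.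
Qed.

Lemma extreme_parallel l u w x :
  nonzero u -> nonzero w -> cross u w = 0 -> extreme l w x -> extreme l u x.
Proof.
  intros Hu Hw Hc. rewrite (parallel_multiple u w Hu Hc).
  apply extreme_scale. intros Hk. rewrite (parallel_multiple u w Hu Hc), Hk in Hw.
  unfold nonzero in Hw; simpl in Hw. lra.
Qed.

Lemma csc_of_cover n p :
  (0 < n)%nat -> two_direction_cover (points n p) -> csc_position n p.
Proof.
  intros Hn [u [w [Hu [Hw Hc]]]].
  destruct (Req_dec (cross u w) 0) as [Z|Z].
  - apply (csc_of_cover_independent n p u (- snd u, fst u)); auto.
    + unfold cross; simpl. destruct Hu as [h|h]; pose proof (Rsqr_pos_lt _ h); unfold Rsqr in *; nra.
    + intros x Hx. left. destruct (Hc _ Hx); auto. apply (extreme_parallel _ u w); auto.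
  - apply (csc_of_cover_independent n p u w); auto.
Qed.

Definition supporting (l : list pt) (a b : pt) : Prop := forall y, In y l -> orient a b y >= 0.

Lemma nonzero_normal a b : a <> b -> nonzero (normal a b).
Proof.
  intros H. unfold nonzero, normal; simpl.
  destruct (Req_dec (fst b) (fst a)); [|right; lra].
  destruct (Req_dec (snd b) (snd a)); [|left; lra].
  exfalso. apply H. destruct a, b; simpl in *; subst; auto.
Qed.

Lemma extreme_on_supporting_line l a b x :
  supporting l a b -> orient a b x = 0 -> extreme l (normal a b) x.
Proof.
  intros H Hx. right. intros y Hy. rewrite (dot_normal a b y), (dot_normal a b x).
  specialize (H y Hy). lra.
Qed.

Lemma extreme_farthest l a b x :
  (forall y, In y l -> orient a b y <= orient a b x) -> extreme l (normal a b) x.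
Proof.
  intros H. left. intros y Hy. rewrite (dot_normal a b y), (dot_normal a b x).
  specialize (H y Hy). lra.
Qed.

Lemma Rmax3_cases r2 r3 r4 :
  (r3 <= r2 /\ r4 <= r2) \/ (r2 <= r3 /\ r4 <= r3) \/ (r2 <= r4 /\ r3 <= r4).
Proof. destruct (Rle_dec r3 r2), (Rle_dec r4 r2), (Rle_dec r4 r3); lra. Qed.

(* The farthest vertex [q_f] from a side [q0 q1] is extreme for the normal of that side,
   together with [q0] and [q1]; if the two remaining vertices are adjacent, their side
   provides the second direction.  Otherwise [f = 3], and the same argument is run on
   the side [q4 q0]. *)
Section ConvexPentagon.
Variables (l : list pt) (q0 q1 q2 q3 q4 : pt).
Hypothesis Hl : forall y, In y l -> y = q0 \/ y = q1 \/ y = q2 \/ y = q3 \/ y = q4.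
Hypotheses (S0 : supporting l q0 q1) (S1 : supporting l q1 q2) (S2 : supporting l q2 q3)
  (S3 : supporting l q3 q4) (S4 : supporting l q4 q0).
Hypotheses (N0 : q0 <> q1) (N1 : q1 <> q2) (N2 : q2 <> q3) (N3 : q3 <> q4) (N4 : q4 <> q0).
Hypotheses (I1 : In q1 l) (I2 : In q2 l) (I3 : In q3 l) (I4 : In q4 l).

Lemma cover_of_sides a b c d :
  a <> b -> c <> d ->
  (forall x, x = q0 \/ x = q1 \/ x = q2 \/ x = q3 \/ x = q4 ->
     extreme l (normal a b) x \/ extreme l (normal c d) x) ->
  two_direction_cover l.
Proof.
  intros Hab Hcd H. exists (normal a b), (normal c d).
  split; [apply nonzero_normal; auto|split; [apply nonzero_normal; auto|]].
  intros x Hx. apply H, Hl, Hx.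
Qed.

Lemma farthest_of_five a b x :
  (forall y, y = q0 \/ y = q1 \/ y = q2 \/ y = q3 \/ y = q4 -> orient a b y <= orient a b x) ->
  extreme l (normal a b) x.
Proof. intros H. apply extreme_farthest. intros y Hy. apply H, Hl, Hy. Qed.

Local Ltac side := apply extreme_on_supporting_line; [assumption | unfold orient; ring].
Local Ltac far := apply farthest_of_five; intros y [->|[->|[->|[->| ->]]]];
  unfold orient in *; lra.

Lemma convex_pentagon_cover : two_direction_cover l.
Proof.
  pose proof (S0 _ I2); pose proof (S0 _ I3); pose proof (S0 _ I4).
  pose proof (S4 _ I1); pose proof (S4 _ I2); pose proof (S4 _ I3).
  destruct (Rmax3_cases (orient q0 q1 q2) (orient q0 q1 q3) (orient q0 q1 q4)) as [F|[F|F]].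
  - apply (cover_of_sides q0 q1 q3 q4); auto.
    intros x [->|[->|[->|[->| ->]]]]; [left; side|left; side|left; far|right; side|right; side].
  - destruct (Rmax3_cases (orient q4 q0 q1) (orient q4 q0 q2) (orient q4 q0 q3)) as [G|[G|G]].
    + apply (cover_of_sides q4 q0 q2 q3); auto.
      intros x [->|[->|[->|[->| ->]]]]; [left; side|left; far|right; side|right; side|left; side].
    + apply (cover_of_sides q4 q0 q0 q1); auto.
      intros x [->|[->|[->|[->| ->]]]]; [left; side|right; side|left; far|right; far|left; side].
    + apply (cover_of_sides q4 q0 q1 q2); auto.
      intros x [->|[->|[->|[->| ->]]]]; [left; side|right; side|right; side|left; far|left; side].
  - apply (cover_of_sides q0 q1 q2 q3); auto.
    intros x [->|[->|[->|[->| ->]]]]; [left; side|left; side|right; side|right; side|left; far].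
Qed.

End ConvexPentagon.

Section SortExists.
Variables (X : Type) (le : X -> X -> Prop) (L : list X).
Hypothesis Htotal : forall x y, In x L -> In y L -> le x y \/ le y x.
Hypothesis Htrans : forall x y z, In x L -> In y L -> In z L -> le x y -> le y z -> le x z.

Lemma insert_sorted_exists a s :
  In a L -> (forall y, In y s -> In y L) -> StronglySorted le s ->
  exists s', Permutation (a :: s) s' /\ StronglySorted le s'.
Proof.
  intros Ha. induction s as [|b s IH]; intros Hs SS.
  - exists [a]. split; auto. repeat constructor.
  - inversion SS as [|? ? SS' F]; subst.
    assert (Hb : In b L) by (apply Hs; left; auto).
    rewrite Forall_forall in F.
    destruct (Htotal a b Ha Hb) as [Hab|Hba].
    + exists (a :: b :: s). split; auto. constructor; auto.
      apply Forall_forall. intros y [<-|Hy]; auto.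
      apply (Htrans a b y); auto. apply Hs; right; auto.
    + destruct IH as [s' [P S']]; auto. { intros y Hy; apply Hs; right; auto. }
      exists (b :: s'). split.
      * eapply perm_trans; [apply perm_swap | apply perm_skip; auto].
      * constructor; auto. apply Forall_forall. intros y Hy.
        apply (Permutation_in _ (Permutation_sym P)) in Hy. destruct Hy as [<-|Hy]; auto.
Qed.

Lemma sorted_exists : exists s, Permutation L s /\ StronglySorted le s.
Proof.
  assert (H : forall k, (forall y, In y k -> In y L) ->
                exists s, Permutation k s /\ StronglySorted le s).
  { intros k. induction k as [|a k IH]; intros Hk.
    - exists []. split; constructor.
    - destruct IH as [s [P S]]. { intros y Hy; apply Hk; right; auto. }
      destruct (insert_sorted_exists a s) as [s' [P' S']]; auto.
      + apply Hk; left; auto.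
      + intros y Hy. apply Hk. right. apply (Permutation_in _ (Permutation_sym P)); auto.
      + exists s'. split; auto. eapply perm_trans; [apply perm_skip; exact P | auto]. }
  apply H. auto.
Qed.

End SortExists.

Lemma StronglySorted4 {X : Type} (le : X -> X -> Prop) a b c d :
  StronglySorted le [a; b; c; d] ->
  le a b /\ le a c /\ le a d /\ le b c /\ le b d /\ le c d.
Proof.
  intros H. inversion H as [|? ? H1 F1]; subst. inversion H1 as [|? ? H2 F2]; subst.
  inversion H2 as [|? ? H3 F3]; subst. rewrite Forall_forall in F1, F2, F3.
  repeat split; [apply F1|apply F1|apply F1|apply F2|apply F2|apply F3]; simpl; auto.
Qed.

Definition lex_lt (A b : pt) : Prop := fst A < fst b \/ (fst A = fst b /\ snd A < snd b).

Definition sqdist (A b : pt) : R := (fst b - fst A) ^ 2 + (snd b - snd A) ^ 2.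

Lemma sqdist_pos A b : lex_lt A b -> 0 < sqdist A b.
Proof.
  unfold sqdist. pose proof (pow2_ge_0 (fst b - fst A)). pose proof (pow2_ge_0 (snd b - snd A)).
  intros [h|[_ h]]; [assert (Hd : 0 < fst b - fst A) by lra | assert (Hd : 0 < snd b - snd A) by lra];
    pose proof (pow_lt _ 2 Hd); lra.
Qed.

Lemma orient_dilation_l A t b c y : dilation A t b c -> orient A c y = t * orient A b y.
Proof. intros [E1 E2]. unfold orient. rewrite E1, E2. ring. Qed.

Lemma orient_dilation_r A t b c y : dilation A t b c -> orient A y c = t * orient A y b.
Proof. intros [E1 E2]. unfold orient. rewrite E1, E2. ring. Qed.

Lemma sqdist_dilation A t b c : dilation A t b c -> sqdist A c = t ^ 2 * sqdist A b.
Proof. intros [E1 E2]. unfold sqdist. rewrite E1, E2. ring. Qed.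

Lemma dilation_1 A b c : dilation A 1 b c -> c = b.
Proof. intros [E1 E2]. destruct b, c; simpl in *. f_equal; lra. Qed.

Lemma dilation_inv A t b c : 0 < t -> dilation A t b c -> dilation A (/ t) c b.
Proof. intros Ht [E1 E2]. unfold dilation. rewrite E1, E2. split; field; lra. Qed.

(* Points lexicographically above [A] lie in an open half-plane bounded by a line
   through [A], so two of them that are collinear with [A] lie on the same ray. *)
Lemma collinear_same_ray A b c :
  lex_lt A b -> lex_lt A c -> orient A b c = 0 -> exists t, 0 < t /\ dilation A t b c.
Proof.
  unfold lex_lt, orient, dilation. intros Hb Hc E.
  destruct Hb as [Hb|[Hb Hb2]].
  - assert (Hc1 : 0 < fst c - fst A).
    { destruct Hc as [Hc|[Hc Hc2]]; [lra|]. exfalso. rewrite Hc in E. nra. }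
    exists ((fst c - fst A) / (fst b - fst A)). split; [apply Rdiv_lt_0_compat; lra|].
    split; [field; lra|]. apply (Rmult_eq_reg_l (fst b - fst A)); [|lra].
    field_simplify; [|lra]. nra.
  - rewrite Hb in E. assert (Hc1 : fst c = fst b) by nra.
    destruct Hc as [Hc|[_ Hc]]; [lra|].
    exists ((snd c - snd A) / (snd b - snd A)). split; [apply Rdiv_lt_0_compat; lra|].
    split; [rewrite Hc1, <- Hb; ring | field; lra].
Qed.

(* In that half-plane, "turning left" is transitive. *)
Lemma det_trans_lexpos b1 b2 c1 c2 d1 d2 :
  (0 < b1 \/ (0 = b1 /\ 0 < b2)) -> (0 < c1 \/ (0 = c1 /\ 0 < c2)) ->
  (0 < d1 \/ (0 = d1 /\ 0 < d2)) ->
  b1 * c2 - b2 * c1 > 0 -> c1 * d2 - c2 * d1 > 0 -> b1 * d2 - b2 * d1 > 0.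
Proof.
  intros Hb Hc Hd E1 E2.
  assert (I : c1 * (b1 * d2 - b2 * d1) = b1 * (c1 * d2 - c2 * d1) + d1 * (b1 * c2 - b2 * c1))
    by ring.
  destruct Hc as [Hc|[Hc Hc2]].
  - destruct Hb as [Hb|[Hb Hb2]]; destruct Hd as [Hd|[Hd Hd2]];
      [| | |subst; nra]; apply (Rmult_lt_reg_l c1); auto; rewrite Rmult_0_r, I; nra.
  - subst c1. destruct Hb as [Hb|[Hb Hb2]]; destruct Hd as [Hd|[Hd Hd2]]; subst; nra.
Qed.

Lemma orient_trans_lex A b c d :
  lex_lt A b -> lex_lt A c -> lex_lt A d ->
  orient A b c > 0 -> orient A c d > 0 -> orient A b d > 0.
Proof.
  unfold lex_lt, orient. intros Hb Hc Hd.
  apply det_trans_lexpos; [destruct Hb as [h|[h h']] | destruct Hc as [h|[h h']]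
    | destruct Hd as [h|[h h']]]; (left; lra) || (right; lra).
Qed.

Definition last_ray (l : list pt) (A b : pt) : Prop := forall y, In y l -> orient A b y <= 0.

Lemma last_ray_dilation l A t b c :
  0 < t -> dilation A t b c -> (last_ray l A b <-> last_ray l A c).
Proof.
  intros Ht HC. unfold last_ray.
  split; intros H y Hy; specialize (H y Hy); rewrite (orient_dilation_l A t b c y HC) in *; nra.
Qed.

Lemma not_last_ray l A b : ~ last_ray l A b -> exists z, In z l /\ orient A b z > 0.
Proof.
  intros H. apply NNPP. intros H'. apply H. intros y Hy.
  apply Rnot_lt_le. intros Hlt. apply H'. eauto.
Qed.

(* Angular order around [A].  Collinear points are ordered by increasing distance from
   [A], except on the last ray, which the boundary of the hull traverses back towards [A]. *)
Definition angle_le (l : list pt) (A b c : pt) : Prop :=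
  orient A b c > 0 \/
  (orient A b c = 0 /\ (last_ray l A b -> sqdist A c <= sqdist A b) /\
                       (~ last_ray l A b -> sqdist A b <= sqdist A c)).

Lemma angle_le_orient l A b c : angle_le l A b c -> orient A b c >= 0.
Proof. intros [H|[H _]]; lra. Qed.

Lemma angle_le_total l A b c : lex_lt A b -> lex_lt A c -> angle_le l A b c \/ angle_le l A c b.
Proof.
  intros Hb Hc. unfold angle_le.
  destruct (Rtotal_order (orient A b c) 0) as [N|[Z|P]]; auto.
  - right. left. unfold orient in *. lra.
  - destruct (collinear_same_ray A b c Hb Hc Z) as [t [Ht HC]].
    assert (Z' : orient A c b = 0) by (unfold orient in *; lra).
    pose proof (last_ray_dilation l A t b c Ht HC) as LE.
    destruct (classic (last_ray l A b)) as [L|L]; destruct (Rle_dec (sqdist A c) (sqdist A b)).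
    + left. right. split; [auto | split; [auto | intros; contradiction]].
    + right. right. split; [auto | split; [intros; lra | intros L'; exfalso; apply L', LE, L]].
    + right. right. split; [auto | split; [intros L'; exfalso; apply L, LE, L' | auto]].
    + left. right. split; [auto | split; [intros; contradiction | intros; lra]].
Qed.

Lemma angle_le_trans l A b c d :
  lex_lt A b -> lex_lt A c -> lex_lt A d ->
  angle_le l A b c -> angle_le l A c d -> angle_le l A b d.
Proof.
  intros Hb Hc Hd R1 R2.
  destruct R1 as [P1|[Z1 [L1 N1]]]; destruct R2 as [P2|[Z2 [L2 N2]]].
  - left. apply (orient_trans_lex A b c d); auto.
  - left. destruct (collinear_same_ray A c d Hc Hd Z2) as [t [Ht HC]].
    rewrite (orient_dilation_r A t c d b HC). apply Rmult_lt_0_compat; lra.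
  - left. destruct (collinear_same_ray A b c Hb Hc Z1) as [t [Ht HC]].
    rewrite (orient_dilation_l A t b c d HC) in P2. nra.
  - destruct (collinear_same_ray A b c Hb Hc Z1) as [t [Ht HC]].
    destruct (collinear_same_ray A c d Hc Hd Z2) as [s [Hs HC']].
    pose proof (last_ray_dilation l A t b c Ht HC). pose proof (last_ray_dilation l A s c d Hs HC').
    right. split; [rewrite (orient_dilation_r A s c d b HC'), Z1; ring|split].
    + intros L. assert (last_ray l A c) by tauto. specialize (L1 L). specialize (L2 H1). lra.
    + intros L. assert (~ last_ray l A c) by tauto. specialize (N1 L). specialize (N2 H1). lra.
Qed.

Lemma dilation_ratio_le_1 A t a b :
  0 < t -> lex_lt A a -> dilation A t a b -> sqdist A b <= sqdist A a -> t <= 1.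
Proof.
  intros Ht Ha HC Hle. rewrite (sqdist_dilation A t a b HC) in Hle.
  pose proof (sqdist_pos A a Ha). apply Rnot_lt_le. intros Hlt.
  assert (1 < t ^ 2) by (simpl; nra). nra.
Qed.

Lemma dilation_ratio_ge_1 A t a b :
  0 < t -> lex_lt A a -> dilation A t a b -> sqdist A a <= sqdist A b -> 1 <= t.
Proof.
  intros Ht Ha HC Hle. rewrite (sqdist_dilation A t a b HC) in Hle.
  pose proof (sqdist_pos A a Ha). apply Rnot_lt_le. intros Hlt.
  assert (t ^ 2 < 1) by (simpl; nra). nra.
Qed.

Lemma orient_split A a b y : orient a b y = orient A a b + orient A b y + orient A y a.
Proof. unfold orient; ring. Qed.

Lemma orient_swap A a y : orient A a y = - orient A y a.
Proof. unfold orient; ring. Qed.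

Definition no_point_in_triangle (l : list pt) : Prop :=
  forall a b c x, In a l -> In b l -> In c l -> In x l ->
    ~ (orient a b x > 0 /\ orient b c x > 0 /\ orient c a x > 0).

Definition no_point_in_chord (l : list pt) : Prop :=
  forall a b c d x t, In a l -> In b l -> In c l -> In d l -> In x l ->
    0 < t < 1 -> dilation a t b x -> orient a b c > 0 -> orient a b d < 0 -> False.

(* Consecutive points [a], [b] of the angular order around [A] span a side of the hull:
   no point lies strictly to the right of [a -> b]. *)
Section AngularNeighbours.
Variables (l : list pt) (A : pt).
Hypotheses (Htri : no_point_in_triangle l) (Hchord : no_point_in_chord l) (IA : In A l).

(* [a] lies strictly inside the segment from [A] to [b], and a witness [z] of
   [~ last_ray l A a] lies on the other side of that chord from [y]. *)
Lemma chord_contradiction a b y t :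
  In a l -> In b l -> In y l -> 1 < t -> dilation A t a b -> ~ last_ray l A a ->
  orient A a y < 0 -> False.
Proof.
  intros Ia Ib Iy Ht HC L Hy.
  destruct (not_last_ray l A a L) as [z [Iz Hz]].
  apply (Hchord A b z y a (/ t)); auto.
  - split; [apply Rinv_0_lt_compat; lra|]. rewrite <- Rinv_1. apply Rinv_lt_contravar; lra.
  - apply dilation_inv; auto; lra.
  - rewrite (orient_dilation_l A t a b z HC). apply Rmult_lt_0_compat; lra.
  - rewrite (orient_dilation_l A t a b y HC). nra.
Qed.

Lemma supporting_before y a b :
  In y l -> In a l -> In b l -> lex_lt A y -> lex_lt A a -> lex_lt A b -> a <> b ->
  angle_le l A y a -> angle_le l A a b -> orient a b y >= 0.
Proof.
  intros Iy Ia Ib Hy Ha Hb Nab Rya Rab.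
  apply Rnot_lt_ge. intros Neg. rewrite (orient_split A) in Neg.
  destruct Rya as [P1 | [Z1 [L1 N1]]].
  - destruct Rab as [P2 | [Z2 [L2 N2]]].
    + apply (Htri A y b a); auto. unfold orient in *. repeat split; lra.
    + destruct (collinear_same_ray A a b Ha Hb Z2) as [t [Ht HC]].
      rewrite (orient_dilation_l A t a b y HC), Z2, (orient_swap A a y) in Neg.
      destruct (classic (last_ray l A a)) as [L|L].
      * pose proof (dilation_ratio_le_1 A t a b Ht Ha HC (L2 L)). nra.
      * pose proof (dilation_ratio_ge_1 A t a b Ht Ha HC (N2 L)).
        assert (t <> 1) by (intros ->; apply Nab; symmetry; apply (dilation_1 A a b HC)).
        apply (chord_contradiction a b y t); auto; [lra|]. rewrite (orient_swap A a y). lra.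
  - destruct (collinear_same_ray A y a Hy Ha Z1) as [s [Hs HC]].
    rewrite Z1 in Neg. pose proof (angle_le_orient l A a b Rab).
    rewrite (orient_dilation_l A s y a b HC) in *. rewrite (orient_swap A b y) in Neg.
    destruct (classic (last_ray l A y)) as [L|L].
    + assert (La : last_ray l A a) by (apply (last_ray_dilation l A s y a Hs HC); auto).
      specialize (La b Ib). rewrite (orient_dilation_l A s y a b HC) in La. nra.
    + pose proof (dilation_ratio_ge_1 A s y a Hs Hy HC (N1 L)). nra.
Qed.

Lemma supporting_after a b y :
  In y l -> In a l -> In b l -> lex_lt A y -> lex_lt A a -> lex_lt A b -> b <> y ->
  angle_le l A a b -> angle_le l A b y -> orient a b y >= 0.
Proof.
  intros Iy Ia Ib Hy Ha Hb Nby Rab Rby.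
  apply Rnot_lt_ge. intros Neg. rewrite (orient_split A) in Neg.
  destruct Rab as [P1 | [Z1 [L1 N1]]].
  - destruct Rby as [P2 | [Z2 [L2 N2]]].
    + apply (Htri A a y b); auto. unfold orient in *. repeat split; lra.
    + destruct (collinear_same_ray A b y Hb Hy Z2) as [t [Ht HC]].
      rewrite Z2, (orient_dilation_l A t b y a HC), (orient_swap A b a) in Neg.
      destruct (classic (last_ray l A b)) as [L|L].
      * pose proof (dilation_ratio_le_1 A t b y Ht Hb HC (L2 L)). nra.
      * pose proof (dilation_ratio_ge_1 A t b y Ht Hb HC (N2 L)).
        assert (t <> 1) by (intros ->; apply Nby; symmetry; apply (dilation_1 A b y HC)).
        apply (chord_contradiction b y a t); auto; [lra|]. rewrite (orient_swap A b a). nra.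
  - destruct (collinear_same_ray A a b Ha Hb Z1) as [t [Ht HC]].
    rewrite Z1 in Neg. pose proof (angle_le_orient l A b y Rby).
    rewrite (orient_dilation_l A t a b y HC) in *. rewrite (orient_swap A y a) in Neg.
    destruct (classic (last_ray l A a)) as [L|L].
    + assert (Lb : last_ray l A b) by (apply (last_ray_dilation l A t a b Ht HC); auto).
      specialize (Lb y Iy). rewrite (orient_dilation_l A t a b y HC) in Lb. nra.
    + pose proof (dilation_ratio_ge_1 A t a b Ht Ha HC (N1 L)). nra.
Qed.

End AngularNeighbours.

Definition lex_le (a b : pt) : Prop := fst a < fst b \/ (fst a = fst b /\ snd a <= snd b).

Lemma lex_min_split l :
  NoDup l -> l <> [] -> exists A r, Permutation l (A :: r) /\ forall y, In y r -> lex_lt A y.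
Proof.
  intros ND Hl.
  destruct (sorted_exists pt lex_le l) as [[|A r] [P SS]].
  - intros x y _ _. unfold lex_le.
    destruct (Rtotal_order (fst x) (fst y)) as [h|[h|h]]; [left; left; auto | | right; left; lra].
    destruct (Rle_dec (snd x) (snd y)); [left|right]; right; split; lra.
  - intros x y z _ _ _. unfold lex_le. intros; lra.
  - apply Permutation_sym, Permutation_nil in P. contradiction.
  - exists A, r. split; auto.
    inversion SS as [|? ? _ F]; subst. rewrite Forall_forall in F.
    apply (Permutation_NoDup P), NoDup_cons_iff in ND. destruct ND as [NA _].
    intros y Hy. destruct (F y Hy) as [h|[h [h'|h']]]; [left; auto | right; auto|].
    exfalso. apply NA. replace A with y; auto. destruct A, y; simpl in *; subst; auto.
Qed.

Lemma NoDup_five (a b c d e : pt) :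
  NoDup [a; b; c; d; e] ->
  a <> b /\ b <> c /\ c <> d /\ d <> e /\ e <> a /\ b <> d /\ b <> e /\ c <> e.
Proof.
  intros ND. repeat rewrite NoDup_cons_iff in ND. simpl in ND.
  repeat split; intros E; subst; tauto.
Qed.

Lemma convex_five_cover l :
  NoDup l -> length l = 5%nat -> no_point_in_triangle l -> no_point_in_chord l ->
  two_direction_cover l.
Proof.
  intros ND Len Htri Hchord.
  destruct (lex_min_split l ND) as [A [r [P1 Hr]]].
  { intros ->. discriminate. }
  assert (Ir : forall y, In y r -> In y l)
    by (intros y Hy; apply (Permutation_in _ (Permutation_sym P1)); right; auto).
  destruct (sorted_exists pt (angle_le l A) r) as [r' [P2 SS]].
  { intros x y Hx Hy. apply angle_le_total; auto. }
  { intros x y z Hx Hy Hz. apply angle_le_trans; auto. }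
  assert (Lr' : length r' = 4%nat)
    by (apply Permutation_length in P1, P2; simpl in P1; lia).
  destruct r' as [|q1 [|q2 [|q3 [|q4 [|? ?]]]]]; simpl in Lr'; try lia.
  destruct (StronglySorted4 _ _ _ _ _ SS) as [R12 [R13 [R14 [R23 [R24 R34]]]]].
  assert (P : Permutation l [A; q1; q2; q3; q4])
    by (eapply perm_trans; [exact P1 | apply perm_skip, P2]).
  assert (Hl : forall y, In y l -> y = A \/ y = q1 \/ y = q2 \/ y = q3 \/ y = q4)
    by (intros y Hy; apply (Permutation_in _ P) in Hy;
        destruct Hy as [<-|[<-|[<-|[<-|[<-|[]]]]]]; auto).
  assert (IA : In A l) by (apply (Permutation_in _ (Permutation_sym P)); simpl; auto).
  assert (Hq : forall q, In q [q1; q2; q3; q4] -> lex_lt A q /\ In q l)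
    by (intros q Hq; apply (Permutation_in _ (Permutation_sym P2)) in Hq; auto).
  destruct (Hq q1) as [H1 I1]; [simpl; auto|].
  destruct (Hq q2) as [H2 I2]; [simpl; auto|].
  destruct (Hq q3) as [H3 I3]; [simpl; auto|].
  destruct (Hq q4) as [H4 I4]; [simpl; auto|].
  destruct (NoDup_five _ _ _ _ _ (Permutation_NoDup P ND))
    as [N01 [N12 [N23 [N34 [N40 [N13 [N14 N24]]]]]]].
  pose proof (angle_le_orient _ _ _ _ R12). pose proof (angle_le_orient _ _ _ _ R13).
  pose proof (angle_le_orient _ _ _ _ R14). pose proof (angle_le_orient _ _ _ _ R23).
  pose proof (angle_le_orient _ _ _ _ R24). pose proof (angle_le_orient _ _ _ _ R34).
  (* The sides [A q1] and [q4 A] are supporting by the angular order itself. *)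
  apply (convex_pentagon_cover l A q1 q2 q3 q4); auto;
    intros y Hy; destruct (Hl y Hy) as [->|[->|[->|[->| ->]]]];
    first [ unfold orient in *; lra
          | solve [apply (supporting_after l A); auto]
          | solve [apply (supporting_before l A); auto] ].
Qed.

Lemma points_NoDup n p :
  (forall i j, (i < n)%nat -> (j < n)%nat -> i <> j -> p i <> p j) -> NoDup (points n p).
Proof.
  intros Hd. apply NoDup_map_NoDup_ForallPairs; [|apply seq_NoDup].
  intros i j Hi Hj E. apply in_seq in Hi, Hj.
  destruct (Nat.eq_dec i j) as [|Hne]; auto. exfalso. apply (Hd i j); auto; lia.
Qed.

Lemma convex_position_no_point_in_triangle n p :
  in_convex_position n p -> no_point_in_triangle (points n p).
Proof.
  intros Hc a b c x Ia Ib Ic Ix [H1 [H2 H3]].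
  apply in_points in Ia as [i [Hi ->]], Ib as [j [Hj ->]], Ic as [k [Hk ->]],
    Ix as [m [Hm ->]].
  destruct (Hc m Hm) as [_ NI]. apply NI, (triangle_interior_hull n p i j k); auto.
Qed.

Lemma convex_position_no_point_in_chord n p :
  in_convex_position n p -> no_point_in_chord (points n p).
Proof.
  intros Hc a b c d x t Ia Ib Ic Id Ix Ht Hx H1 H2.
  apply in_points in Ia as [i [Hi ->]], Ib as [j [Hj ->]], Ic as [k [Hk ->]],
    Id as [k' [Hk' ->]], Ix as [m [Hm ->]].
  destruct (Hc m Hm) as [_ NI]. apply NI, (chord_interior_hull n p i j k k' _ t); auto.
Qed.

Theorem mainTheorem3 (p : nat -> pt) :
  (forall i j, (i < 5)%nat -> (j < 5)%nat -> i <> j -> p i <> p j) ->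
  in_convex_position 5 p ->
  csc_position 5 p.
Proof.
  intros Hd Hc. apply csc_of_cover; [lia|]. apply convex_five_cover.
  - apply points_NoDup, Hd.
  - reflexivity.
  - apply convex_position_no_point_in_triangle, Hc.
  - apply convex_position_no_point_in_chord, Hc.
Qed.
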